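(* Let $n\ge 2$ be an integer, let $A$ be a complex Banach algebra, and let $0<r<\frac{1}{2}$, $\theta\in[0,\infty)$ be real numbers. Suppose $f:A\to A$ satisfies $$\Big\|\mu f\Big(\frac{x+y}{2}\Big)+\mu f\Big(\frac{x-y}{2}\Big)-f(\mu x)+f(a^n)-\big(f(a)a^{n-1}+af(a)a^{n-2}+\cdots+a^{n-2}f(a)a+a^{n-1}f(a)\big)\Big\|\le \theta(\|x\|^r\|y\|^r+\|a\|^{2r})$$ for all $\mu\in\mathbb{T}$ and all $x,y,a\in A$. Then there exists a unique $n$-Jordan derivation $D:A\to A$ such that $$\|f(x)-D(x)\|\le \frac{3^r\theta}{2-2^r}\|x\|^{2r}$$ for all $x\in A$.
   Context: $\mathbb{T}=\{\mu\in\mathbb{C}:|\mu|=1\}$. For an integer $n\ge 2$, an $n$-Jordan derivation on an algebra $A$ is a linear map $D:A\to A$ such that $D(a^n)=D(a)a^{n-1}+aD(a)a^{n-2}+\cdots+a^{n-2}D(a)a+a^{n-1}D(a)$ for all $a\in A$. *)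

From HB Require Import structures.
From mathcomp Require Import all_boot all_order all_algebra.
From mathcomp Require Import all_classical all_reals all_analysis.
From mathcomp Require Import complex.
Set Implicit Arguments. Unset Strict Implicit. Unset Printing Implicit Defensive.
Import Order.TTheory GRing.Theory Num.Theory.
Import numFieldNormedType.Exports.
Local Open Scope ring_scope.
Local Open Scope complex_scope.

(* The complex field is R[i] (= complex R) for R : realType.
   A complex Banach space is a completeNormedModType R[i]; its norm
   takes values in R[i] (nonnegative reals), we read them in R via Re. *)
Definition nrm (R : realType) (A : normedModType R[i]) (x : A) : R :=
  complex.Re `|x|.

Definition banach_algebra_mul (R : realType) (A : completeNormedModType R[i])
  (mul : A -> A -> A) : Prop :=
  (forall x y z, mul x (mul y z) = mul (mul x y) z) /\
  (forall x y z, mul (x + y) z = mul x z + mul y z) /\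
  (forall x y z, mul x (y + z) = mul x y + mul x z) /\
  (forall (c : R[i]) x y, mul (c *: x) y = c *: mul x y) /\
  (forall (c : R[i]) x y, mul x (c *: y) = c *: mul x y) /\
  (forall x y, nrm (mul x y) <= nrm x * nrm y).

Definition lpow (A : Type) (mul : A -> A -> A) (a : A) (k : nat) (x : A) : A :=
  iter k (mul a) x.
Definition rpow (A : Type) (mul : A -> A -> A) (a : A) (k : nat) (x : A) : A :=
  iter k (fun y => mul y a) x.

Definition apow (A : Type) (mul : A -> A -> A) (a : A) (n : nat) : A :=
  lpow mul a n.-1 a.

Definition jordan_sum (R : realType) (A : completeNormedModType R[i])
  (mul : A -> A -> A) (n : nat) (D : A -> A) (a : A) : A :=
  \sum_(k < n) rpow mul a (n.-1 - k) (lpow mul a k (D a)).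

Definition n_jordan_derivation (R : realType) (A : completeNormedModType R[i])
  (mul : A -> A -> A) (n : nat) (D : A -> A) : Prop :=
  [/\ (forall x y, D (x + y) = D x + D y),
      (forall (c : R[i]) x, D (c *: x) = c *: D x)
    & (forall a, D (apow mul a n) = jordan_sum mul n D a)].

(* Put y = 0 and a = 0: the right-hand side vanishes, which forces f 0 = 0 and
   f (mu x) = mu (f (x/2) + f (x/2)) for unimodular mu, so f is T-homogeneous and
   commutes with doubling.  With a = 0, x = u + v, y = u - v, the Cauchy defect
   f u + f v - f (u + v) is bounded by a quantity that grows like (2^(2r))^k when
   u, v are replaced by 2^k u, 2^k v, while the defect itself grows like 2^k;
   since 2r < 1 it vanishes.  An additive T-homogeneous map is C-linear, so the
   Jordan defect f (a^n) - sum a^k f(a) a^(n-1-k) is homogeneous of degree n >= 2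
   and bounded by theta |a|^(2r), hence zero by the same scaling argument.  Thus
   f itself is the n-Jordan derivation, and for any other D the linear map f - D
   is bounded by a multiple of |x|^(2r), hence zero. *)

From HB Require Import structures.
From mathcomp Require Import all_boot all_order all_algebra.
From mathcomp Require Import all_classical all_reals all_analysis.
From mathcomp Require Import complex.
From mathcomp Require Import lra zify.
Import Order.TTheory GRing.Theory Num.Theory.
Import numFieldNormedType.Exports.
Local Open Scope ring_scope.
Local Open Scope classical_set_scope.
Local Open Scope complex_scope.

Section Reals.
Context {R : realType}.

Lemma geometric_domination_le0 (d C p q : R) :
  0 < q -> q < p -> (forall k, d * p ^+ k <= C * q ^+ k) -> d <= 0.
Proof.
move=> q0 qp dom; have p0 : 0 < p by apply: lt_trans qp.
have qp1 : `|q / p| < 1 by rewrite ger0_norm ?divr_ge0 ?ltW // ltr_pdivrMr // mul1r.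
have lim0 : C * (q / p) ^+ k @[k --> \oo] --> (0 : R).
  by rewrite -(mulr0 C); apply: cvgMl_tmp; exact: cvg_expr.
rewrite -(cvg_lim _ lim0) //; apply: limr_ge; first by apply/cvg_ex; exists 0.
by near=> k; rewrite expr_div_n mulrA ler_pdivlMr ?exprn_gt0 //; exact: dom.
Unshelve. all: by end_near. Qed.

Lemma gt1_ltr_powR (a s t : R) : 1 < a -> s < t -> a `^ s < a `^ t.
Proof.
move=> a1 st; have a0 : 0 < a by apply: lt_trans a1.
by rewrite /powR gt_eqF // ltr_expR ltr_pM2r // ln_gt0.
Qed.

Lemma double_lt1 {r : R} : r < 2^-1 -> 2 * r < 1.
Proof. by rewrite mulrC -ltr_pdivlMr // mul1r. Qed.

End Reals.

Section Norm.
Context {R : realType} {V : normedModType R[i]}.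

Lemma nrmE (x : V) : `|x| = (nrm x)%:C.
Proof. by have /ger0_Im := normr_ge0 x; rewrite /nrm; case: `|x| => a b /= ->. Qed.

Lemma nrm_ge0 (x : V) : 0 <= nrm x.
Proof. by rewrite -lecR -nrmE; exact: normr_ge0. Qed.

Lemma nrm0 : nrm (0 : V) = 0.
Proof. by rewrite /nrm normr0. Qed.

Lemma nrm_le0 (x : V) : nrm x <= 0 -> x = 0.
Proof. by rewrite -lecR -nrmE normr_le0 => /eqP. Qed.

Lemma nrmZ_nat (k : nat) (x : V) : nrm ((k%:R : R[i]) *: x) = k%:R * nrm x.
Proof.
by rewrite {1}/nrm normrZ normr_nat nrmE -(rmorph_nat (real_complex R)) -rmorphM.
Qed.

Lemma powR_nrmZ_pow2 (s : R) (k : nat) (x : V) :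
  nrm (((2 ^ k)%:R : R[i]) *: x) `^ s = (2 `^ s) ^+ k * nrm x `^ s.
Proof.
by rewrite nrmZ_nat powRM ?nrm_ge0 // natrX -powR_mulrn // powRAC powR_mulrn ?powR_ge0.
Qed.

End Norm.

Lemma homogeneous_bounded_eq0 {R : realType} {V W : normedModType R[i]}
    {g : V -> W} (m : nat) {s C : R} :
  s < m%:R -> (forall x, g (2%:R *: x) = 2%:R ^+ m *: g x) ->
  (forall x, nrm (g x) <= C * nrm x `^ s) -> forall x, g x = 0.
Proof.
move=> s_lt_m g2 g_bound x; apply: nrm_le0.
have g_pow2 k : g ((2 ^ k)%:R *: x) = ((2 ^ m) ^ k)%:R *: g x.
  elim: k => [|k IH]; first by rewrite !expn0 !scale1r.
  by rewrite expnS natrM -scalerA g2 IH scalerA -natrX -natrM -expnS.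
apply: (@geometric_domination_le0 _ _ (C * nrm x `^ s) (2 ^ m)%:R (2 `^ s)).
- exact: powR_gt0.
- by rewrite natrX -powR_mulrn // gt1_ltr_powR // ltr1n.
move=> k; have := g_bound ((2 ^ k)%:R *: x).
by rewrite g_pow2 nrmZ_nat powR_nrmZ_pow2 natrX; lra.
Qed.

Section Scaling.
Context {R : realType}.

Lemma scale_half_double {V : lmodType R[i]} (u : V) : (2%:R : R[i])^-1 *: (u + u) = u.
Proof. by rewrite -mulr2n -[u *+ 2]scaler_nat scalerA mulVf ?scale1r // pnatr_eq0. Qed.

Lemma double_inj {V : lmodType R[i]} (u v : V) : u + u = v + v -> u = v.
Proof. by move=> uv; rewrite -(scale_half_double u) uv scale_half_double. Qed.

Lemma unimodular_additive_scalable {V W : lmodType R[i]} {f : V -> W} :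
  {morph f : x y / x + y} ->
  (forall mu : R[i], `|mu| = 1 -> forall x, f (mu *: x) = mu *: f x) ->
  forall (c : R[i]) x, f (c *: x) = c *: f x.
Proof.
move=> fD fT.
have f_nat k x : f (k%:R *: x) = k%:R *: f x.
  elim: k => [|k IH]; last by rewrite -addn1 natrD !scalerDl fD IH !scale1r.
  by apply/(addrI (f 0)); rewrite !scale0r -fD !addr0.
have f_real1 t x : -1 <= t <= 1 -> f (t%:C *: x) = t%:C *: f x.
  (* t is the common real part of the unimodular numbers t +- i sqrt (1 - t^2). *)
  case/andP=> t1 t2; set s := Num.sqrt (1 - t ^+ 2).
  have s2 : s ^+ 2 = 1 - t ^+ 2 by rewrite sqr_sqrtr //; nra.
  have mu1 : `|t +i* s| = 1 by rewrite normc_def /= s2 addrC subrK sqrtr1.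
  have nu1 : `|t +i* (- s)| = 1 by rewrite normc_def /= sqrrN s2 addrC subrK sqrtr1.
  have mu_nu : (t +i* s) + (t +i* (- s)) = t%:C + t%:C by simpc.
  apply: double_inj.
  by rewrite -fD -scalerDl -mu_nu scalerDl fD !fT // -scalerDl mu_nu scalerDl.
have f_real t x : f (t%:C *: x) = t%:C *: f x.
  set M := (Num.truncn `|t|).+1.
  have M0 : 0 < M%:R :> R by rewrite ltr0n.
  have -> : t%:C = M%:R * (t / M%:R)%:C.
    by rewrite -(rmorph_nat (real_complex R)) -rmorphM mulrCA divff ?mulr1 ?gt_eqF.
  rewrite -!scalerA f_nat f_real1 // -ler_norml normrM normfV (gtr0_norm M0).
  by rewrite ler_pdivrMr // mul1r ltW // truncnS_gt.
have i1 : `|'i : R[i]| = 1 by rewrite normc_def /= expr0n /= add0r expr1n sqrtr1.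
move=> c x; rewrite (complexE c) !scalerDl fD f_real -scalerA fT // f_real.
by rewrite scalerA.
Qed.

End Scaling.

Section ApproximateMap.
Context {R : realType} {V : normedModType R[i]} {f E : V -> V} {r theta : R}.
Hypothesis r_gt0 : 0 < r.
Hypothesis r_lt_half : r < 2^-1.
Hypothesis f_approx : forall mu : R[i], `|mu| = 1 -> forall x y a : V,
  nrm (mu *: f ((2%:R : R[i])^-1 *: (x + y)) + mu *: f ((2%:R : R[i])^-1 *: (x - y))
       - f (mu *: x) + E a)
  <= theta * (nrm x `^ r * nrm y `^ r + nrm a `^ (2 * r)).

Let two_r_lt1 : 2 * r < 1 := double_lt1 r_lt_half.

Let half (x : V) := (2%:R : R[i])^-1 *: x.

Lemma approx_halves_eq0 (mu : R[i]) : `|mu| = 1 -> forall x : V,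
  mu *: f (half x) + mu *: f (half x) - f (mu *: x) + E 0 = 0.
Proof.
move=> mu1 x; apply: nrm_le0; have := f_approx _ mu1 x 0 0.
by rewrite addr0 subr0 nrm0 !powR0 ?mulf_neq0 ?gt_eqF // mulr0 addr0 mulr0.
Qed.

Lemma approx_map0 : f 0 = 0.
Proof.
have := approx_halves_eq0 _ (normr1 _) 0; have := approx_halves_eq0 _ (normrN1 _) 0.
rewrite /half !scaler0 !scaleN1r !scale1r.
rewrite -!opprD addrC addrK => /eqP; rewrite subr_eq0 => /eqP ->.
rewrite !addrA => f4.
by apply: double_inj; rewrite addr0; apply: double_inj; rewrite addr0 addrA.
Qed.

Lemma approx_defect0 : E 0 = 0.
Proof.
have := approx_halves_eq0 _ (normr1 _) 0.
by rewrite /half !scale1r scaler0 approx_map0 addr0 subr0 add0r.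
Qed.

Lemma approx_scale_halves (mu : R[i]) : `|mu| = 1 ->
  forall x, f (mu *: x) = mu *: (f (half x) + f (half x)).
Proof.
move=> mu1 x; have := approx_halves_eq0 _ mu1 x.
by rewrite approx_defect0 addr0 scalerDr => /eqP; rewrite subr_eq0 => /eqP.
Qed.

Lemma approx_halves (x : V) : f x = f (half x) + f (half x).
Proof. by have := approx_scale_halves _ (normr1 _) x; rewrite !scale1r. Qed.

Lemma approx_unimodular (mu : R[i]) : `|mu| = 1 -> forall x, f (mu *: x) = mu *: f x.
Proof. by move=> mu1 x; rewrite approx_scale_halves // -approx_halves. Qed.

Lemma approx_double (x : V) : f (x + x) = f x + f x.
Proof. by rewrite approx_halves /half scale_half_double. Qed.

Lemma approx_pow2 (k : nat) (x : V) : f ((2 ^ k)%:R *: x) = (2 ^ k)%:R *: f x.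
Proof.
elim: k => [|k IH]; first by rewrite expn0 !scale1r.
by rewrite expnS mulSn mul1n natrD !scalerDl approx_double IH.
Qed.

Lemma approx_additive : {morph f : u v / u + v}.
Proof.
move=> u v; apply/eqP; rewrite eq_sym -subr_eq0; apply/eqP/nrm_le0.
set q := 2 `^ (2 * r) : R.
have q_eq : q = 2 `^ r * 2 `^ r.
  by rewrite /q mulr_natl (mulr2n r) powRD // pnatr_eq0 implybT.
have q_lt2 : q < 2 by rewrite -[X in _ < X]powRr1 // gt1_ltr_powR ?ltr1n.
apply: (@geometric_domination_le0 _ _ (theta * (nrm (u + v) `^ r * nrm (u - v) `^ r)) 2 q)
  => //; first exact: powR_gt0.
move=> k; set c : R[i] := (2 ^ k)%:R.
have sum_uv : c *: (u + v) + c *: (u - v) = c *: u + c *: u.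
  by rewrite -!scalerDr addrACA subrr addr0.
have diff_uv : c *: (u + v) - c *: (u - v) = c *: v + c *: v.
  by rewrite -scalerBr -scalerDr opprB addrC addrA subrK.
have := f_approx _ (normr1 _) (c *: (u + v)) (c *: (u - v)) 0.
rewrite sum_uv diff_uv /half !scale_half_double !scale1r approx_defect0.
rewrite !approx_pow2 -scalerDr -scalerBr addr0 nrmZ_nat !powR_nrmZ_pow2 nrm0.
rewrite powR0 ?mulf_neq0 ?gt_eqF // addr0 natrX q_eq exprMn; lra.
Qed.

Lemma approx_defect_bound (a : V) : nrm (E a) <= theta * nrm a `^ (2 * r).
Proof.
have := f_approx _ (normr1 _) 0 0 a.
rewrite subr0 addr0 !scaler0 !scale1r approx_map0 !addr0 subr0 add0r.
by rewrite nrm0 powR0 ?gt_eqF // mul0r add0r.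
Qed.

End ApproximateMap.

Section JordanHomogeneity.
Context {R : realType} {A : completeNormedModType R[i]} (mul : A -> A -> A).
Hypothesis mulZl : forall (c : R[i]) x y, mul (c *: x) y = c *: mul x y.
Hypothesis mulZr : forall (c : R[i]) x y, mul x (c *: y) = c *: mul x y.

Lemma lpowZ a k (c : R[i]) x : lpow mul a k (c *: x) = c *: lpow mul a k x.
Proof. by elim: k => //= k IH; rewrite /lpow /= -/(lpow _ _ _ _) IH mulZr. Qed.

Lemma rpowZ a k (c : R[i]) x : rpow mul a k (c *: x) = c *: rpow mul a k x.
Proof. by elim: k => //= k IH; rewrite /rpow /= -/(rpow _ _ _ _) IH mulZl. Qed.

Lemma lpowZ_base a k (c : R[i]) x : lpow mul (c *: a) k x = c ^+ k *: lpow mul a k x.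
Proof.
elim: k => [|k IH]; first by rewrite expr0 scale1r.
by rewrite /lpow /= -!/(lpow _ _ _ _) IH mulZl mulZr scalerA exprS.
Qed.

Lemma rpowZ_base a k (c : R[i]) x : rpow mul (c *: a) k x = c ^+ k *: rpow mul a k x.
Proof.
elim: k => [|k IH]; first by rewrite expr0 scale1r.
by rewrite /rpow /= -!/(rpow _ _ _ _) IH mulZl mulZr scalerA exprSr.
Qed.

Lemma apowZ n a (c : R[i]) : (0 < n)%N -> apow mul (c *: a) n = c ^+ n *: apow mul a n.
Proof. by case: n => // n _; rewrite /apow /= lpowZ_base lpowZ scalerA -exprSr. Qed.

Lemma jordan_sumZ n (D : A -> A) a (c : R[i]) :
  (forall y, D (c *: y) = c *: D y) ->
  jordan_sum mul n D (c *: a) = c ^+ n *: jordan_sum mul n D a.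
Proof.
move=> DZ; rewrite /jordan_sum scaler_sumr; apply: eq_bigr => k _.
rewrite DZ lpowZ_base lpowZ rpowZ_base !rpowZ !scalerA -!exprD -exprSr.
by congr (_ ^+ _ *: _); have := ltn_ord k; lia.
Qed.

Definition jordan_defect n (D : A -> A) a := D (apow mul a n) - jordan_sum mul n D a.

Lemma jordan_defectZ n (D : A -> A) a (c : R[i]) : (0 < n)%N ->
  (forall c' y, D (c' *: y) = c' *: D y) ->
  jordan_defect n D (c *: a) = c ^+ n *: jordan_defect n D a.
Proof.
by move=> n_gt0 DZ; rewrite /jordan_defect apowZ // DZ jordan_sumZ // scalerBr.
Qed.

End JordanHomogeneity.

Theorem corollary2p6 (R : realType) (A : completeNormedModType R[i])
  (mul : A -> A -> A) (n : nat) (r theta : R) (f : A -> A) :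
  banach_algebra_mul mul ->
  (2 <= n)%N ->
  0 < r -> r < 2^-1 -> 0 <= theta ->
  (forall (mu : R[i]), `|mu| = 1 -> forall x y a : A,
     nrm (mu *: f ((2%:R : R[i])^-1 *: (x + y)) + mu *: f ((2%:R : R[i])^-1 *: (x - y))
          - f (mu *: x) + f (apow mul a n) - jordan_sum mul n f a)
     <= theta * (nrm x `^ r * nrm y `^ r + nrm a `^ (2 * r))) ->
  exists! D : A -> A,
    n_jordan_derivation mul n D /\
    (forall x : A, nrm (f x - D x) <= 3 `^ r * theta / (2 - 2 `^ r) * nrm x `^ (2 * r)).
Proof.
move=> [_ [_ [_ [mulZl [mulZr _]]]]] n_ge2 r_gt0 r_lt_half theta_ge0 f_approx.
have E_approx : forall mu : R[i], `|mu| = 1 -> forall x y a : A,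
    nrm (mu *: f ((2%:R : R[i])^-1 *: (x + y)) + mu *: f ((2%:R : R[i])^-1 *: (x - y))
         - f (mu *: x) + jordan_defect mul n f a)
    <= theta * (nrm x `^ r * nrm y `^ r + nrm a `^ (2 * r)).
  by move=> mu mu1 x y a; rewrite addrA; exact: f_approx.
have fD := approx_additive r_gt0 r_lt_half E_approx.
have fZ := unimodular_additive_scalable fD (approx_unimodular r_gt0 E_approx).
have two_r_lt1 := double_lt1 r_lt_half.
have defect0 : forall a, jordan_defect mul n f a = 0.
  apply: (homogeneous_bounded_eq0 n _ _ (approx_defect_bound r_gt0 E_approx)).
  - by apply: lt_le_trans two_r_lt1 _; rewrite ler1n ltnW.
  - by move=> a; apply: jordan_defectZ => //; rewrite ltnW.
exists f; split; first split.
- split; [exact: fD | exact: fZ | move=> a].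
  by apply/eqP; rewrite -subr_eq0; apply/eqP; exact: defect0.
- move=> x; rewrite subrr nrm0; apply: mulr_ge0; last exact: powR_ge0.
  rewrite divr_ge0 ?mulr_ge0 ?powR_ge0 // subr_ge0 ltW //.
  by rewrite -[ltRHS]powRr1 // gt1_ltr_powR ?ltr1n //; lra.
- move=> D [[_ DZ _] D_bound]; apply/funext => x; apply/eqP; rewrite -subr_eq0.
  apply/eqP; move: x; apply: (homogeneous_bounded_eq0 1 _ _ D_bound) => //.
  by move=> x; rewrite fZ DZ -scalerBr expr1.
Qed.
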